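(* Let $s,t\geq0$ be integers. The isomorphism type generating series of the virtual species $\mathcal Q^{s,t}(X,X,X)$ is \[ \widetilde{\mathcal Q^{s,t}}(x)=\frac{(1-x^{s+2})(1-x^{t+2})}{1-x}-1, \] and the isomorphism type generating series of the virtual species $X^2-[t>0]X^2-[s>0]\mathcal E_2(X)$ is $x^2-[t>0]x^2-[s>0]x^2$. In particular both are symmetric in $s$ and $t$.
   Context: Species and virtual species and their operations are as in the theory of combinatorial species. For a species $F$ the cycle index series is $Z_F=\sum_{n\ge0}\frac1{n!}\sum_{\sigma\in\mathfrak S_n}\mathrm{fix}\,F[\sigma]\,p_1^{\sigma_1}p_2^{\sigma_2}\cdots$ (with $\sigma_k$ the number of $k$-cycles of $\sigma$), extended additively to virtual species; the isomorphism type generating series $\widetilde F(x)$ is obtained by substituting $p_k=x^k$ (for an actual species it counts isomorphism types by size). $X,Y,Z$ are singleton species of three sorts; $1=\mathcal E_0$; $\mathcal E$ is the species of sets, $\mathcal E_n$, $\mathcal E_{m\leq\bullet<n}$, $\mathcal E_{<n}$ its restrictions to sets of size $n$, sizes $m,\dots,n-1$, sizes $<n$; $\mathcal E(-X)$ is the multiplicative inverse of $\mathcal E(X)$; $[P]$ is the Iverson bracket. $\mathcal Q^{s,t}(X,Y,Z)=\big(1+X+\mathcal E_{2\leq\bullet<2+s}(Z)\big)\,\mathcal E\big(X(\mathcal E_{<1+t}(Y)\mathcal E(-X)-1)\big)-1$. *)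

From HB Require Import structures.
From mathcomp Require Import all_boot all_order all_algebra all_fingroup.
From mathcomp Require Import mpoly.
Set Implicit Arguments. Unset Strict Implicit. Unset Printing Implicit Defensive.
Import GRing.Theory.
Local Open Scope ring_scope.

(* Cycle index series (over rat) in the power-sum variables p_1, p_2, ...  *)
(* A cycle index series Z is represented by the family of its truncations:  *)
(* (Z N) : {mpoly rat[N]} is the part of Z of weighted degree <= N, where    *)
(* the variable 'X_i (i : 'I_N) stands for p_(i+1) and p_k has weight k.     *)
(* (Monomials of weight <= N only involve p_1..p_N, so nothing is lost.)     *)
(* Virtual species enter the statement only through their cycle index        *)
(* series, and the operations below are the cycle-index images of the       *)
(* species operations (sum, difference, product, substitution).            *)

Definition cis := forall N : nat, {mpoly rat[N]}.

(* the variable p_k at truncation level N (0 if k = 0 or k > N) *)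
Definition pv (N k : nat) : {mpoly rat[N]} := \sum_(i < N | i.+1 == k) 'X_i.

Definition wdeg N (m : 'X_{1..N}) : nat := (\sum_(i < N) i.+1 * m i)%N.

Definition trunc N (p : {mpoly rat[N]}) : {mpoly rat[N]} :=
  \sum_(m <- msupp p | (wdeg m <= N)%N) p@_m *: 'X_[m].

(* Cycle index of a (virtual) species given by its fixed-point counts:
   Z_F = sum_n 1/n! sum_(sigma in S_n) fix F[sigma] p_1^sigma_1 p_2^sigma_2 ...
   ( prod over the cycles c of sigma of p_|c| ). *)
Definition cidx (fx : forall n : nat, {perm 'I_n} -> int) : cis := fun N =>
  \sum_(n < N.+1) (n`!%:R : rat)^-1 *:
     \sum_(sigma : {perm 'I_n})
        (fx n sigma)%:~R *: \prod_(c in porbits sigma) pv N #|c|.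

Definition cadd (F G : cis) : cis := fun N => F N + G N.
Definition copp (F : cis) : cis := fun N => - F N.
Definition csub (F G : cis) : cis := cadd F (copp G).
Definition cscale (a : rat) (F : cis) : cis := fun N => a *: F N.
Definition cmul (F G : cis) : cis := fun N => trunc (F N * G N).

Definition cstretch N (j : nat) (q : {mpoly rat[N]}) : {mpoly rat[N]} :=
  comp_mpoly [tuple pv N (j * l.+1) | l < N] q.

(* plethystic substitution F o G (for G without constant term):
   p_j |-> G(p_j, p_2j, p_3j, ...) *)
Definition ccomp (F G : cis) : cis := fun N =>
  trunc (comp_mpoly [tuple trunc (cstretch j.+1 (G N)) | j < N] (F N)).

(* multiplicative inverse of a series with constant term 1:
   1/Z = sum_j (1 - Z)^j *)
Definition cinv (F : cis) : cis := fun N =>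
  trunc (\sum_(j < N.+1) (1 - F N) ^+ j).

Definition s_one : cis := cidx (fun n _ => (n == 0%N)%:Z).
Definition s_X : cis := cidx (fun n _ => (n == 1%N)%:Z).
Definition s_E : cis := cidx (fun n _ => 1).
Definition s_En (k : nat) : cis := cidx (fun n _ => (n == k)%:Z).
Definition s_Erange (m k : nat) : cis :=
  cidx (fun n _ => ((m <= n) && (n < k))%N%:Z).
Definition s_Elt (k : nat) : cis := s_Erange 0 k.
Definition s_Eneg : cis := cinv s_E.                                    (* E(-X) *)

Definition Qst (s t : nat) : cis :=
  csub (cmul (cadd (cadd s_one s_X) (s_Erange 2 (2 + s)))
             (ccomp s_E (cmul s_X (csub (cmul (s_Elt (1 + t)) s_Eneg) s_one))))
       s_one.

Definition Vst (s t : nat) : cis :=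
  csub (csub (cmul s_X s_X) (cscale (0 < t)%N%:R (cmul s_X s_X)))
       (cscale (0 < s)%N%:R (s_En 2)).

(* isomorphism type generating series: substitute p_k = x^k;
   coefficient of x^n (read off from the truncation at level n) *)
Definition isotype (F : cis) (n : nat) : rat :=
  (mmap (fun c : rat => c%:P) (fun i : 'I_n => ('X^(i.+1) : {poly rat})) (F n))`_n.

From HB Require Import structures.
From mathcomp Require Import all_boot all_order all_algebra all_fingroup.
From mathcomp Require Import mpoly.
Set Implicit Arguments. Unset Strict Implicit. Unset Printing Implicit Defensive.
Import GRing.Theory Num.Theory.
Local Open Scope ring_scope.

(* Substituting p_k := x^k in a cycle index series is a ring morphism that is blind to
   truncation and turns the stretching p_l |-> p_(j l) into x |-> x^j.  Hence the
   isomorphism type series of sums, products and of E(-X) = 1/E(X) are computed from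
   those of their constituents, and when G has series -x^d the series of E(G) is
   sum_n x^(d n) / n! * sum_(sigma in S_n) (-1)^(number of cycles of sigma).
   Multiplying by a fixed transposition flips the parity of the number of cycles, so
   this signed count vanishes for n >= 2 and E(G) has series 1 - x^d.  The argument
   G = X (E_{<1+t}(X) E(-X) - 1) of Q^{s,t} has series x ((1 - x^(t+1)) - 1) = -x^(t+2),
   so Q^{s,t} has series (1 + x + ... + x^(s+1)) (1 - x^(t+2)) - 1. *)

Section Agreement.
Variable R : comNzRingType.
Implicit Types p q r : {poly R}.

Definition agree N p q := forall k, (k <= N)%N -> p`_k = q`_k.

Lemma agree_sym N p q : agree N p q -> agree N q p.
Proof. by move=> Epq k le_kN; rewrite Epq. Qed.

Lemma agree_trans N p q r : agree N p q -> agree N q r -> agree N p r.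
Proof. by move=> Epq Eqr k le_kN; rewrite Epq ?Eqr. Qed.

Lemma agreeD N p q p' q' :
  agree N p p' -> agree N q q' -> agree N (p + q) (p' + q').
Proof. by move=> Ep Eq k le_kN; rewrite !coefD Ep ?Eq. Qed.

Lemma agreeN N p p' : agree N p p' -> agree N (- p) (- p').
Proof. by move=> Ep k le_kN; rewrite !coefN Ep. Qed.

Lemma agreeB N p q p' q' :
  agree N p p' -> agree N q q' -> agree N (p - q) (p' - q').
Proof. by move=> Ep Eq; apply/agreeD/agreeN. Qed.

Lemma agreeZ N c p p' : agree N p p' -> agree N (c *: p) (c *: p').
Proof. by move=> Ep k le_kN; rewrite !coefZ Ep. Qed.

Lemma agreeM N p q p' q' :
  agree N p p' -> agree N q q' -> agree N (p * q) (p' * q').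
Proof.
move=> Ep Eq k le_kN; rewrite !coefM; apply: eq_bigr => i _.
have le_ik : (i <= k)%N by rewrite -ltnS.
by rewrite Ep ?Eq // (leq_trans _ le_kN) ?leq_subr.
Qed.

Lemma agree_sum N (I : Type) (r : seq I) (P : pred I) (F G : I -> {poly R}) :
  (forall i, P i -> agree N (F i) (G i)) ->
  agree N (\sum_(i <- r | P i) F i) (\sum_(i <- r | P i) G i).
Proof. by move=> EFG; apply: (big_ind2 (agree N)) => // *; apply: agreeD. Qed.

Lemma agree_prod N (I : Type) (r : seq I) (P : pred I) (F G : I -> {poly R}) :
  (forall i, P i -> agree N (F i) (G i)) ->
  agree N (\prod_(i <- r | P i) F i) (\prod_(i <- r | P i) G i).
Proof. by move=> EFG; apply: (big_ind2 (agree N)) => // *; apply: agreeM. Qed.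

Lemma agreeX N p p' e : agree N p p' -> agree N (p ^+ e) (p' ^+ e).
Proof. by move=> Ep; elim: e => // e IHe; rewrite !exprS; apply: agreeM. Qed.

Lemma agree_mulXn0 N m p : (N < m)%N -> agree N (p * 'X^m) 0.
Proof. by move=> lt_Nm k le_kN; rewrite coefMXn coef0 (leq_ltn_trans le_kN). Qed.

Lemma agree_expS0 N p : p`_0 = 0 -> agree N (p ^+ N.+1) 0.
Proof.
move=> p0_0; have -> : p = drop_poly 1 p * 'X^1.
  rewrite -[LHS](poly_take_drop 1) -[RHS]add0r; congr (_ + _).
  by apply/polyP => -[|i]; rewrite coef_take_poly coef0.
by rewrite exprMn -exprM; apply: agree_mulXn0; rewrite mul1n.
Qed.

Lemma agree_comp_Xn N d p q :
  (0 < d)%N -> agree N p q -> agree N (p \Po 'X^d) (q \Po 'X^d).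
Proof.
move=> d_gt0 Epq k le_kN; rewrite !coef_comp_poly_Xn //; case: (d %| k)%N => //.
exact/Epq/(leq_trans (leq_div _ _)).
Qed.

End Agreement.

Lemma agree_mmap n (S : nzRingType) (R : comNzRingType) (f : S -> {poly R})
    (h1 h2 : 'I_n -> {poly R}) N p :
  (forall i, agree N (h1 i) (h2 i)) -> agree N (mmap f h1 p) (mmap f h2 p).
Proof.
move=> Eh; apply: agree_sum => m _; apply: agreeM => //.
by apply: agree_prod => i _; apply: agreeX.
Qed.

Lemma rmorph_mmap n (R S S' : nzRingType) (f : R -> S) (h : 'I_n -> S)
    (g : {rmorphism S -> S'}) p :
  g (mmap f h p) = mmap (g \o f) (g \o h) p.
Proof.
rewrite /mmap rmorph_sum; apply: eq_bigr => m _.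
by rewrite rmorphM rmorph_prod; congr (_ * _); apply: eq_bigr => i _; rewrite rmorphXn.
Qed.

Lemma eq_mmap n (R S : nzRingType) (f1 f2 : R -> S) (h1 h2 : 'I_n -> S) :
  f1 =1 f2 -> h1 =1 h2 -> mmap f1 h1 =1 mmap f2 h2.
Proof.
by move=> Ef Eh p; apply: eq_bigr => m _; rewrite Ef (mmap1_eq _ Eh).
Qed.

Lemma mmap_polyCZ N (h : 'I_N -> {poly rat}) c p :
  mmap polyC h (c *: p) = c *: mmap polyC h p.
Proof. by rewrite mmapZ mul_polyC. Qed.

Lemma mmap_polyC_comp K N (h : 'I_K -> {poly rat}) (lq : N.-tuple {mpoly rat[K]}) p :
  mmap polyC h (comp_mpoly lq p) = mmap polyC (fun i => mmap polyC h (tnth lq i)) p.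
Proof. by rewrite rmorph_mmap; apply: eq_mmap => // c /=; rewrite mmapC. Qed.

Lemma mmap_pv N (H : nat -> {poly rat}) k : (0 < k <= N)%N ->
  mmap polyC (fun i : 'I_N => H i.+1) (pv N k) = H k.
Proof.
case: k => // k /andP[_ lt_kN].
by rewrite raddf_sum /= (big_pred1 (Ordinal lt_kN)) ?mmapX ?mmap1U.
Qed.

Lemma pv_overflow N k : (N < k)%N -> pv N k = 0.
Proof.
move=> lt_Nk; rewrite /pv big_pred0 // => i; apply: contraTF lt_Nk => /eqP <-.
by rewrite -leqNgt.
Qed.

Local Notation isosubst := (mmap (@polyC rat) (fun i : ordinal _ => 'X^(i.+1))).

Lemma isosubst_monomial N (m : 'X_{1..N}) : isosubst 'X_[m] = 'X^(wdeg m).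
Proof.
by rewrite mmapX /mmap1 /wdeg -prodrXr; apply: eq_bigr => i _; rewrite exprM.
Qed.

Lemma isosubst_pv N k : (0 < k <= N)%N -> isosubst (pv N k) = 'X^k.
Proof. exact: (mmap_pv (fun k => 'X^k)). Qed.

Lemma agree_isosubst_trunc N (p : {mpoly rat[N]}) :
  agree N (isosubst (trunc p)) (isosubst p).
Proof.
rewrite /trunc [X in agree _ _ (mmap _ _ X)](mpolyE p) !raddf_sum /=.
rewrite [X in agree _ _ X](bigID (fun m => wdeg m <= N)%N) /=.
rewrite -[X in agree _ X]addr0; apply: agreeD => //; apply: agree_sym.
rewrite [X in agree _ _ X](_ : _ = \sum_(m <- msupp p | ~~ (wdeg m <= N)%N) 0).
  2: by rewrite big1.
apply: agree_sum => m.
rewrite -ltnNge mmap_polyCZ isosubst_monomial => lt_Nm.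
rewrite -(scaler0 _ p@_m); apply: agreeZ.
by rewrite -[X in agree _ X]mul1r; apply: agree_mulXn0.
Qed.

Lemma sum_card_porbits (T : finType) (s : {perm T}) :
  (\sum_(c in porbits s) #|c|)%N = #|T|.
Proof.
have actsT : [acts <[s]>%g, on [set: T] | 'P] by apply/actsP => g _ x; rewrite !inE.
rewrite -cardsT (card_partition (orbit_partition actsT)).
apply: eq_bigl => c; rewrite /porbits porbitE.
by apply/imsetP/imsetP => -[x _ ->]; exists x.
Qed.

Lemma card_porbit_range (T : finType) (s : {perm T}) c :
  c \in porbits s -> (0 < #|c| <= #|T|)%N.
Proof. by case/imsetP => x _ ->; rewrite lt0n card_porbit_neq0 max_card. Qed.

Lemma prod_porbits (R : comNzRingType) (T : finType) (s : {perm T}) (b y : R) :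
  \prod_(c in porbits s) (b * y ^+ #|c|) = b ^+ #|porbits s| * y ^+ #|T|.
Proof. by rewrite big_split /= prodr_const prodrXr sum_card_porbits. Qed.

Lemma isosubst_cidx N fx : isosubst (cidx fx N) =
  \poly_(n < N.+1) ((n`!%:R)^-1 * \sum_(s : {perm 'I_n}) (fx n s)%:~R).
Proof.
rewrite raddf_sum poly_def; apply: eq_bigr => n _ /=.
have le_nN : (n <= N)%N by rewrite -ltnS.
rewrite mmap_polyCZ [X in _ *: X]raddf_sum -scalerA scaler_suml; congr (_ *: _).
apply: eq_bigr => s _; rewrite /= mmap_polyCZ rmorph_prod; congr (_ *: _).
transitivity (\prod_(c in porbits s) ('X^#|c| : {poly rat})); last first.
  by rewrite prodrXr sum_card_porbits card_ord.
apply: eq_bigr => c /card_porbit_range; rewrite card_ord => /andP[c_gt0 le_cn].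
by rewrite /= isosubst_pv // c_gt0 (leq_trans le_cn le_nN).
Qed.

Lemma isosubst_cidx_const N (b : nat -> int) :
  isosubst (cidx (fun n _ => b n) N) = \poly_(n < N.+1) (b n)%:~R.
Proof.
rewrite isosubst_cidx; apply: eq_poly => n _.
rewrite sumr_const card_Sn -(mulr_natl (b n)%:~R) mulKf //.
by rewrite pnatr_eq0 -lt0n fact_gt0.
Qed.

Lemma agree_isosubst_stretch N j (q : {mpoly rat[N]}) : (0 < j)%N ->
  agree N (isosubst (cstretch j q)) (isosubst q \Po 'X^j).
Proof.
move=> j_gt0; rewrite mmap_polyC_comp rmorph_mmap.
rewrite [X in agree _ _ X]
  (@eq_mmap _ _ _ _ polyC _ (fun i => 'X^(j * i.+1))) => [|c|i] /=.
- apply: agree_mmap => i; rewrite tnth_mktuple.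
  have [le_jN|lt_Nj] := leqP (j * i.+1) N.
    by rewrite isosubst_pv // muln_gt0 j_gt0.
  rewrite pv_overflow // raddf0 -[X in agree _ _ X]mul1r.
  exact/agree_sym/agree_mulXn0.
- by rewrite comp_polyC.
- by rewrite rmorphXn /= comp_polyX -exprM mulnC.
Qed.

Definition has_isotype (F : cis) (P : {poly rat}) :=
  forall N, agree N (isosubst (F N)) P.

Lemma isotype_coef F P n : has_isotype F P -> isotype F n = P`_n.
Proof. by move=> FP; apply: FP. Qed.

Section IsotypeAlgebra.
Variables (F G : cis) (P Q : {poly rat}).
Hypotheses (FP : has_isotype F P) (GQ : has_isotype G Q).

Lemma has_isotype_add : has_isotype (cadd F G) (P + Q).
Proof. by move=> N; rewrite /cadd raddfD; apply: agreeD. Qed.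

Lemma has_isotype_sub : has_isotype (csub F G) (P - Q).
Proof. by move=> N; rewrite /csub /cadd /copp raddfB; apply: agreeB. Qed.

Lemma has_isotype_scale a : has_isotype (cscale a F) (a *: P).
Proof. by move=> N; rewrite /cscale mmap_polyCZ; apply: agreeZ. Qed.

Lemma has_isotype_mul : has_isotype (cmul F G) (P * Q).
Proof.
move=> N; apply: agree_trans (agree_isosubst_trunc _) _.
by rewrite rmorphM; apply: agreeM.
Qed.

End IsotypeAlgebra.

Lemma has_isotype_cidx (b : nat -> int) (P : {poly rat}) :
  (forall n, (b n)%:~R = P`_n) -> has_isotype (cidx (fun n _ => b n)) P.
Proof.
by move=> bP N k le_kN; rewrite isosubst_cidx_const coef_poly ltnS le_kN bP.
Qed.

Lemma agree_isosubst_ccomp fx G g N : has_isotype G g ->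
  agree N (isosubst (ccomp (cidx fx) G N))
    (\sum_(n < N.+1) (n`!%:R)^-1 *: \sum_(s : {perm 'I_n})
        (fx n s)%:~R *: \prod_(c in porbits s) (g \Po 'X^#|c|)).
Proof.
move=> Gg; apply: agree_trans (agree_isosubst_trunc _) _.
rewrite mmap_polyC_comp raddf_sum; apply: agree_sum => n _ /=.
have le_nN : (n <= N)%N by rewrite -ltnS.
rewrite mmap_polyCZ [X in _ *: X]raddf_sum; apply/agreeZ/agree_sum => s _ /=.
rewrite mmap_polyCZ rmorph_prod; apply/agreeZ/agree_prod => c /card_porbit_range.
rewrite card_ord => /andP[c_gt0 le_cn] /=.
pose H k := isosubst (trunc (cstretch k (G N))).
rewrite (@eq_mmap _ _ _ _ polyC _ (fun i => H i.+1)) => [|//|i]; last first.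
  by rewrite tnth_mktuple.
rewrite (mmap_pv H) ?c_gt0 ?(leq_trans le_cn le_nN) //.
apply: agree_trans (agree_isosubst_trunc _) _.
apply: agree_trans (agree_isosubst_stretch _ c_gt0) _.
exact: agree_comp_Xn.
Qed.

Lemma odd_porbits_mul_tperm (T : finType) (x y : T) (s : {perm T}) : x != y ->
  odd #|porbits (tperm x y * s)%g| = ~~ odd #|porbits s|.
Proof.
move=> neq_xy; have := odd_mul_tperm x y s; rewrite /odd_perm neq_xy.
by move/(congr1 (addb (odd #|T|))); rewrite !addKb addbCA addKb.
Qed.

Lemma sum_sign_porbits_eq0 (R : numDomainType) (T : finType) : (1 < #|T|)%N ->
  \sum_(s : {perm T}) ((-1) ^+ #|porbits s| : R) = 0.
Proof.
case/card_gt1P => x [y [_ _ neq_xy]].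
set S := \sum_s _; have SN : S = - S.
  rewrite {1}/S (reindex_inj (mulgI (tperm x y))) -sumrN; apply: eq_bigr => s _.
  by rewrite -signr_odd odd_porbits_mul_tperm // signrN signr_odd.
have : S *+ 2 = 0 by rewrite mulr2n {1}SN addNr.
by move/eqP; rewrite mulrn_eq0 => /eqP.
Qed.

Lemma sum_sign_porbits n :
  \sum_(s : {perm 'I_n}) ((-1) ^+ #|porbits s| : rat) = (n == 0)%:R - (n == 1)%:R.
Proof.
have card_porbits_le (T : finType) (s : {perm T}) : (#|porbits s| <= #|T|)%N.
  exact: leq_imset_card.
case: n => [|[|n]]; last by rewrite sum_sign_porbits_eq0 ?card_ord // subrr.
- rewrite (eq_bigr (fun _ => 1)) ?sumr_const ?card_Sn ?subr0 // => s _.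
  by move: (card_porbits_le _ s); rewrite card_ord leqn0 => /eqP ->.
- rewrite (eq_bigr (fun _ => -1)) ?sumr_const ?card_Sn ?sub0r // => s _.
  have porbits_gt0 : (0 < #|porbits s|)%N.
    by apply/card_gt0P; exists (porbit s ord0); apply: imset_f.
  suff -> : #|porbits s| = 1%N by [].
  apply/eqP; rewrite eqn_leq porbits_gt0 andbT.
  by rewrite (leq_trans (card_porbits_le _ s)) ?card_ord.
Qed.

Lemma has_isotype_comp_E G d : (0 < d)%N ->
  has_isotype G (- 'X^d) -> has_isotype (ccomp s_E G) (1 - 'X^d).
Proof.
move=> d_gt0 Gd N.
apply: agree_trans (@agree_isosubst_ccomp (fun _ _ => 1) _ _ N Gd) _.
have signed_term n (s : {perm 'I_n}) :
    (1 : int)%:~R *: \prod_(c in porbits s) (- 'X^d \Po 'X^#|c|) =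
    (-1) ^+ #|porbits s| *: 'X^(d * n) :> {poly rat}.
  have := prod_porbits s (-1) ('X^d : {poly rat}); rewrite card_ord -exprM => prodE.
  rewrite scale1r -mul_polyC rmorphXn rmorphN1 -prodE; apply: eq_bigr => c _.
  by rewrite rmorphN /= rmorphXn /= comp_polyX -!exprM mulN1r mulnC.
under eq_bigr do under eq_bigr do rewrite signed_term.
under eq_bigr do rewrite -scaler_suml sum_sign_porbits scalerA.
case: N => [|N].
  rewrite big_ord1 /= invr1 mul1r subr0 scale1r muln0 => k.
  rewrite leqn0 => /eqP ->.
  by rewrite coefXn coefB coef1 coefXn (ltn_eqF d_gt0) subr0.
rewrite 2!big_ord_recl big1 => [|n _]; last by rewrite /= subrr mulr0 scale0r.
by rewrite /= !invr1 !mul1r subr0 sub0r scale1r muln0 muln1 addr0 scaleN1r.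
Qed.

Lemma geometric_sum_mul (R : comNzRingType) K :
  (\sum_(i < K) 'X^i) * (1 - 'X) = 1 - 'X^K :> {poly R}.
Proof. by rewrite mulrC -opprB mulNr -subrX1 opprB. Qed.

Lemma agree_isosubst_cinv F N f g :
  agree N (isosubst (F N)) f -> f`_0 = 1 -> agree N (f * g) 1 ->
  agree N (isosubst (cinv F N)) g.
Proof.
move=> Ff f0_1 fg1; apply: agree_trans (agree_isosubst_trunc _) _.
set S := \sum_(j < N.+1) (1 - f) ^+ j.
have FS : agree N (isosubst (\sum_(j < N.+1) (1 - F N) ^+ j)) S.
  rewrite rmorph_sum; apply: agree_sum => j _.
  by rewrite /= rmorphXn rmorphB rmorph1; apply/agreeX/agreeB.
have fS1 : agree N (f * S) 1.
  have -> : f * S = 1 - (1 - f) ^+ N.+1.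
    have -> : f * S = - ((1 - f - 1) * S).
      by rewrite addrAC subrr add0r mulNr opprK.
    by rewrite -subrX1 opprB.
  rewrite -[X in agree _ _ X]subr0; apply: agreeB => //.
  by apply: agree_expS0; rewrite coefB coef1 f0_1 subrr.
apply: agree_trans; first exact: FS.
apply: (@agree_trans _ _ _ ((f * g) * S)).
  by rewrite -[X in agree _ X]mul1r; apply: agreeM => //; apply: agree_sym.
by rewrite mulrAC -[X in agree _ _ X]mul1r; apply: agreeM.
Qed.

Lemma has_isotype_one : has_isotype s_one 1.
Proof. by apply: has_isotype_cidx => n; rewrite coef1; case: (n == 0)%N. Qed.

Lemma has_isotype_X : has_isotype s_X 'X.
Proof. by apply: has_isotype_cidx => n; rewrite coefX; case: (n == 1)%N. Qed.

Lemma has_isotype_En k : has_isotype (s_En k) 'X^k.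
Proof. by apply: has_isotype_cidx => n; rewrite coefXn; case: (n == k). Qed.

Lemma has_isotype_Erange m k :
  has_isotype (s_Erange m k) (\poly_(n < k) (m <= n)%N%:R).
Proof.
by apply: has_isotype_cidx => n; rewrite coef_poly; case: (m <= n)%N; case: (n < k)%N.
Qed.

Lemma poly_one_sumXn K : \poly_(n < K) 1 = \sum_(i < K) 'X^i :> {poly rat}.
Proof. by rewrite poly_def; apply: eq_bigr => i _; rewrite scale1r. Qed.

Lemma has_isotype_Eneg : has_isotype s_Eneg (1 - 'X).
Proof.
move=> N; apply: (agree_isosubst_cinv (f := \poly_(n < N.+1) 1)).
- by rewrite isosubst_cidx_const.
- by rewrite coef_poly.
- rewrite poly_one_sumXn geometric_sum_mul -[X in agree _ _ X]subr0.
  by apply: agreeB => //; rewrite -[X in agree _ X]mul1r; apply: agree_mulXn0.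
Qed.

Lemma has_isotype_Qst_inner t :
  has_isotype (cmul s_X (csub (cmul (s_Elt (1 + t)) s_Eneg) s_one)) (- 'X^(t + 2)).
Proof.
have := has_isotype_mul has_isotype_X (has_isotype_sub (has_isotype_mul
  (has_isotype_Erange 0 (1 + t)) has_isotype_Eneg) has_isotype_one).
rewrite (eq_poly (fun _ => 1)) // poly_one_sumXn geometric_sum_mul.
by rewrite addrAC subrr add0r mulrN -exprS add1n addn2.
Qed.

Lemma has_isotype_Qst_outer s :
  has_isotype (cadd (cadd s_one s_X) (s_Erange 2 (2 + s))) (\poly_(n < s + 2) 1).
Proof.
have := has_isotype_add (has_isotype_add has_isotype_one has_isotype_X)
  (has_isotype_Erange 2 (2 + s)).
suff -> : 1 + 'X + \poly_(n < 2 + s) (2 <= n)%N%:R = \poly_(n < s + 2) 1 :> {poly rat}.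
  by [].
apply/polyP => k; rewrite !coefD coef1 coefX !coef_poly addnC addn2.
by case: k => [|[|k]]; rewrite /= ?addr0 ?add0r.
Qed.

Lemma has_isotype_Qst s t :
  has_isotype (Qst s t) ((1 - 'X^(s + 2)) * (1 - 'X^(t + 2)) %/ (1 - 'X) - 1).
Proof.
have subX_neq0 : (1 - 'X : {poly rat}) != 0.
  apply/eqP => /(congr1 (coefp 0)) /=.
  by rewrite coefB coef1 coefX coef0 subr0 => /eqP; rewrite oner_eq0.
rewrite -[1 - 'X^(s + 2)]geometric_sum_mul mulrAC mulpK // -poly_one_sumXn.
apply/has_isotype_sub/has_isotype_one/has_isotype_mul; first exact: has_isotype_Qst_outer.
by apply: has_isotype_comp_E; [rewrite addn2 | apply: has_isotype_Qst_inner].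
Qed.

Lemma has_isotype_Vst s t :
  has_isotype (Vst s t) ('X^2 - (0 < t)%N%:R *: 'X^2 - (0 < s)%N%:R *: 'X^2).
Proof.
have XX : has_isotype (cmul s_X s_X) 'X^2.
  by rewrite expr2; apply: has_isotype_mul has_isotype_X has_isotype_X.
apply/has_isotype_sub/has_isotype_scale/has_isotype_En.
exact/has_isotype_sub/has_isotype_scale.
Qed.

Theorem lemma4p5 (s t : nat) :
  (forall n : nat, isotype (Qst s t) n =
         (((1 - 'X^(s + 2)) * (1 - 'X^(t + 2)) %/ (1 - 'X) - 1 : {poly rat})`_n)) /\
      (forall n : nat, isotype (Vst s t) n =
         (('X^2 - (0 < t)%N%:R *: 'X^2 - (0 < s)%N%:R *: 'X^2 : {poly rat})`_n)) /\
      (forall n : nat, isotype (Qst s t) n = isotype (Qst t s) n) /\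
      (forall n : nat, isotype (Vst s t) n = isotype (Vst t s) n).
Proof.
have isoQ s' t' n := isotype_coef n (has_isotype_Qst s' t').
have isoV s' t' n := isotype_coef n (has_isotype_Vst s' t').
split; [|split; [|split]] => n.
- exact: isoQ.
- exact: isoV.
- by rewrite [LHS]isoQ [RHS]isoQ mulrC.
- by rewrite [LHS]isoV [RHS]isoV addrAC.
Qed.
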